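(* For any distribution $\mu$ over $\{0,1\}^V$, any $\theta\in(0,1)$ and any $\epsilon\in(0,1)$, if $T_1\ge T^{\mathrm{FD}}_{\mathrm{mix}}(\mu,\theta,\frac\epsilon2)$ and $T_2\ge T^{\mathrm{tilted}}_{\mathrm{mix}}(\mu,\theta,\frac{\epsilon}{2T_1})$, then the output $X=\mathsf{contr}(X^{(T_1T_2)}_{\mathrm{alg}})$ of the algorithm $\mathcal A_\mu(\theta,T_1,T_2)$ satisfies $d_{\mathrm{TV}}(X,\mu)\le\epsilon$.
   Context: Tilted distribution $(\theta*\mu)(\sigma)\propto\mu(\sigma)\theta^{\|\sigma\|_1}$; for $\Lambda\subseteq V$, $(\theta*\mu)^{\mathbf 1_{\Lambda}}$ is it conditioned on all coordinates in $\Lambda$ being 1; $\mu_\Lambda$ is the marginal on $\Lambda$. Glauber dynamics $P$ on $\nu$: pick $v$ uniformly, resample $X_v\sim\nu_v^{X_{V\setminus\{v\}}}$; $T^{\mathrm{GD}}_{\mathrm{mix}}(\nu,\epsilon)=\max_{X:\nu(X)>0}\min\{t:d_{\mathrm{TV}}(P^t(X,\cdot),\nu)\le\epsilon\}$; $T^{\mathrm{tilted}}_{\mathrm{mix}}(\mu,\theta,\epsilon)=\max\{T^{\mathrm{GD}}_{\mathrm{mix}}((\theta*\mu)^{\mathbf 1_\Lambda},\epsilon):\mu_\Lambda(\mathbf 1_\Lambda)>0\}$. Field dynamics $P_{\theta,\mu}$: from $X$, build random $S\subseteq V$ including each $v$ independently with probability $\theta$ if $X_v=1$, $1$ if $X_v=0$;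 resample $X\sim(\theta*\mu)^{\mathbf 1_{V\setminus S}}$. $T^{\mathrm{FD}}_{\mathrm{mix}}(\mu,\theta,\epsilon)=\max_{X\in\mathrm{supp}\,\mu}\min\{t:d_{\mathrm{TV}}(P^t_{\theta,\mu}(X,\cdot),\mu)\le\epsilon\}$. $\mathsf{lift}:\{0,1\}^V\to\{0,1,\star\}^V$ is random: independently per coordinate, $0\mapsto0$, and $1\mapsto\star$ with probability $1-\theta$, $1\mapsto1$ with probability $\theta$. $\mathsf{contr}:\{0,1,\star\}^V\to\{0,1\}^V$ maps $0\mapsto0$ and $1,\star\mapsto1$ coordinatewise. Algorithm $\mathcal A_\mu(\theta,T_1,T_2)$: set $X=\mathsf{lift}(\mathbf 1_V)$; repeat $T_1$ times: (a) $X\gets\mathsf{contr}(X)$; (b) $X\gets\mathsf{lift}(X)$, $S=\{v:X_v\ne\star\}$; (c) repeat $T_2$ times: pick $v\in V$ uniformly; if $v\in S$ resample $X_v\sim(\theta*\mu)_v^{\sigma_{V\setminus\{v\}}}$ with $\sigma=\mathsf{contr}(X)$, otherwise keep $X_v=\star$. $X^{(0)}_{\mathrm{alg}}=\mathsf{lift}(\mathbf 1_V)$ is the initial state and $X^{(t)}_{\mathrm{alg}}$ is the state after the $t$-th single-site step in (c); the output is $\mathsf{contr}(X^{(T_1T_2)}_{\mathrm{alg}})$.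
   Formalization: The distribution μ is further assumed to satisfy $\mu(\mathbf 1_V)>0$, so the all-ones configuration $\mathbf 1_V$ lies in the support of μ. The statement above fails without it. *)

From HB Require Import structures.
From mathcomp Require Import all_boot all_order all_algebra.
Set Implicit Arguments. Unset Strict Implicit. Unset Printing Implicit Defensive.
Import Order.TTheory GRing.Theory Num.Theory.
Local Open Scope ring_scope.

Definition is_distr (R : realFieldType) (T : finType) (p : T -> R) : Prop :=
  (forall x, 0 <= p x) /\ \sum_x p x = 1.

Definition dTV (R : realFieldType) (T : finType) (p q : T -> R) : R :=
  2^-1 * \sum_x `|p x - q x|.

Definition dirac (R : realFieldType) (T : finType) (x : T) : T -> R :=
  fun y => (x == y)%:R.

Definition push (R : realFieldType) (T U : finType) (p : T -> R) (K : T -> U -> R)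
  : U -> R := fun y => \sum_x p x * K x y.

Definition kpow (R : realFieldType) (T : finType) (K : T -> T -> R) (t : nat) (X : T)
  : T -> R := iter t (fun p => push p K) (dirac R X).

(* "T >= T_mix(nu, eps)" for the chain K with stationary nu, where
   T_mix = max_{X : nu X > 0} min {t : dTV(K^t(X,.), nu) <= eps}
   (min of the empty set being +infinity). *)
Definition mix_le (R : realFieldType) (T : finType) (K : T -> T -> R) (nu : T -> R)
  (Tm : nat) (eps : R) : Prop :=
  forall X, 0 < nu X -> exists t, (t <= Tm)%N /\ dTV (kpow K t X) nu <= eps.

Section Spins.
Variables (R : realFieldType) (V : finType).

Definition conf := {ffun V -> bool}.

Definition nones (s : conf) : nat := #|[pred v | s v]|.

Definition tilt (theta : R) (mu : conf -> R) : conf -> R :=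
  fun s => mu s * theta ^+ nones s / \sum_(t : conf) mu t * theta ^+ nones t.

Definition ones_on (L : {set V}) (s : conf) : bool := [forall v in L, s v].

Definition marg1 (mu : conf -> R) (L : {set V}) : R :=
  \sum_(t : conf | ones_on L t) mu t.

Definition cond1 (nu : conf -> R) (L : {set V}) : conf -> R :=
  fun s => if ones_on L s then nu s / marg1 nu L else 0.

Definition setv (s : conf) (v : V) (b : bool) : conf :=
  [ffun w => if w == v then b else s w].

Definition condv (nu : conf -> R) (s : conf) (v : V) (b : bool) : R :=
  nu (setv s v b) / (nu (setv s v false) + nu (setv s v true)).

Definition GD (nu : conf -> R) (X Y : conf) : R :=
  #|V|%:R^-1 * \sum_(v : V) \sum_(b : bool) condv nu X v b * (Y == setv X v b)%:R.

Definition GD_mix_le (nu : conf -> R) (Tm : nat) (eps : R) : Prop :=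
  mix_le (GD nu) nu Tm eps.

Definition tilted_mix_le (mu : conf -> R) (theta : R) (Tm : nat) (eps : R) : Prop :=
  forall L : {set V}, 0 < marg1 mu L -> GD_mix_le (cond1 (tilt theta mu) L) Tm eps.

(* field dynamics P_{theta,mu}: S contains v w.p. theta if X_v = 1, w.p. 1 if X_v = 0;
   then resample from (theta*mu)^{1_{V \ S}} *)
Definition FD (theta : R) (mu : conf -> R) (X Y : conf) : R :=
  \sum_(S : {set V})
     (\prod_(v : V) (if X v then (if v \in S then theta else 1 - theta)
                     else (if v \in S then 1 else 0)))
     * cond1 (tilt theta mu) (~: S) Y.

Definition FD_mix_le (mu : conf -> R) (theta : R) (Tm : nat) (eps : R) : Prop :=
  mix_le (FD theta mu) mu Tm eps.

(* {0,1,star}^V : Some false = 0, Some true = 1, None = star *)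
Definition xconf := {ffun V -> option bool}.

Definition lift (theta : R) (s : conf) (x : xconf) : R :=
  \prod_(v : V) match s v, x v with
                | false, Some false => 1
                | true, Some true => theta
                | true, None => 1 - theta
                | _, _ => 0
                end.

Definition contr (x : xconf) : conf := [ffun v => if x v is Some b then b else true].

Definition contrK (x : xconf) (s : conf) : R := (contr x == s)%:R.

Definition xsetv (x : xconf) (v : V) (b : bool) : xconf :=
  [ffun w => if w == v then Some b else x w].

Definition algstep (theta : R) (mu : conf -> R) (X Y : xconf) : R :=
  #|V|%:R^-1 * \sum_(v : V)
    (if X v is None then (Y == X)%:R
     else \sum_(b : bool) condv (tilt theta mu) (contr X) v b * (Y == xsetv X v b)%:R).

(* one round: (a), (b), then T2 steps of (c) *)
Definition alg_round (theta : R) (mu : conf -> R) (T2 : nat) (p : xconf -> R)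
  : xconf -> R :=
  iter T2 (fun q => push q (algstep theta mu)) (push (push p contrK) (lift theta)).

Definition alg_state (theta : R) (mu : conf -> R) (T1 T2 : nat) : xconf -> R :=
  iter T1 (alg_round theta mu T2) (push (dirac R [ffun => true]) (lift theta)).

Definition alg_out (theta : R) (mu : conf -> R) (T1 T2 : nat) : conf -> R :=
  push (alg_state theta mu T1 T2) contrK.

End Spins.

From Pilot Require Import Defs.
From HB Require Import structures.
From mathcomp Require Import all_boot all_order all_algebra ring.
From Stdlib Require Import FunctionalExtensionality.
Set Implicit Arguments. Unset Strict Implicit. Unset Printing Implicit Defensive.
Import Order.TTheory GRing.Theory Num.Theory.
Local Open Scope ring_scope.

(* Started from a configuration [s] with [mu s > 0], one round of the algorithm
   (contract, lift, then [T2] single-site steps) chooses the set [S] of non-star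
   sites with exactly the law of the random set of the field dynamics.  The
   starred sites stay frozen at 1, and the contraction of the single-site chain
   is Glauber dynamics for [(theta * mu)^{1_{V \ S}}].  Hence a round is
   [eps / (2 T1)]-close in total variation to one step [P_{theta,mu}(s, .)], and
   rounds never leave the support of [mu], where the mixing hypothesis applies.
   As kernels contract total variation, a hybrid argument over the [T1] rounds
   gives distance [eps / 2] to [P_{theta,mu}^{T1}(1, .)], which is itself
   [eps / 2]-close to [mu]. *)

Section Kernels.
Variable R : realFieldType.
Implicit Types (T U W : finType).

Definition subprob T (p : T -> R) := (forall x, 0 <= p x) /\ \sum_x p x <= 1.

Definition substochastic T U (K : T -> U -> R) := forall x, subprob (K x).

Definition supported T (p : T -> R) (G : pred T) := forall x, p x != 0 -> G x.

Definition closed_under T (K : T -> T -> R) (G : pred T) :=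
  forall x, G x -> supported (K x) G.

Lemma sum_indicator T (a : T) (F : T -> R) : \sum_x (a == x)%:R * F x = F a.
Proof.
rewrite (bigD1 a) //= eqxx mul1r big1 ?addr0 // => x /negbTE.
by rewrite eq_sym => ->; rewrite mul0r.
Qed.

Lemma sum_indicator_r T (a : T) (F : T -> R) : \sum_x F x * (x == a)%:R = F a.
Proof.
by rewrite -[RHS](sum_indicator a); apply: eq_bigr => x _; rewrite mulrC eq_sym.
Qed.

Lemma subprob_dirac T (a : T) : subprob (dirac R a).
Proof.
split=> [x|]; first by rewrite /dirac ler0n.
have := sum_indicator a (fun=> 1 : R); under eq_bigr do rewrite mulr1.
by rewrite /dirac => ->.
Qed.

Lemma subprob_uniform_mixture (I : finType) T (f : I -> T -> R) :
  (forall i, subprob (f i)) -> subprob (fun y => #|I|%:R^-1 * \sum_i f i y).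
Proof.
move=> f1; split=> [y|].
  by rewrite mulr_ge0 ?invr_ge0 ?ler0n ?sumr_ge0 // => i _; apply: (f1 i).1.
rewrite -mulr_sumr exchange_big /=.
have [->|n0] := eqVneq (#|I|%:R : R) 0; first by rewrite invr0 mul0r ler01.
rewrite -[X in _ <= X](mulVf n0) ler_wpM2l ?invr_ge0 ?ler0n //.
apply: le_trans (_ : \sum_(i : I) 1 <= _); last by rewrite sumr_const.
by apply: ler_sum => i _; apply: (f1 i).2.
Qed.

Lemma subprob_push T U (p : T -> R) (K : T -> U -> R) :
  subprob p -> substochastic K -> subprob (push p K).
Proof.
move=> [p0 p1] K1; split=> [y|].
  by rewrite /push sumr_ge0 // => x _; rewrite mulr_ge0 ?(K1 x).1.
rewrite /push exchange_big /=; apply: le_trans p1; apply: ler_sum => x _.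
by rewrite -mulr_sumr ler_piMr ?(K1 x).2.
Qed.

Lemma subprob_iter T (K : T -> T -> R) p t :
  substochastic K -> subprob p -> subprob (iter t (fun q => push q K) p).
Proof. by move=> K1 p1; elim: t => //= t IH; apply: subprob_push. Qed.

Lemma push_comp T U W (p : T -> R) (K : T -> U -> R) (L : U -> W -> R) :
  push (push p K) L = push p (fun x => push (K x) L).
Proof.
apply: functional_extensionality => z; rewrite /push.
under eq_bigr => y _ do rewrite mulr_suml.
rewrite exchange_big; apply: eq_bigr => x _; rewrite mulr_sumr.
by apply: eq_bigr => y _; rewrite mulrA.
Qed.

Lemma iter_push T U (K : U -> U -> R) (L : T -> U -> R) p t :
  iter t (fun q => push q K) (push p L) = push p (fun x => iter t (fun q => push q K) (L x)).
Proof. by elim: t => //= t ->; rewrite push_comp. Qed.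

Lemma push_dirac T U (a : T) (K : T -> U -> R) : push (dirac R a) K = K a.
Proof. by apply: functional_extensionality => y; rewrite /push /dirac sum_indicator. Qed.

Lemma push_diracr T (p : T -> R) : push p (@dirac R T) = p.
Proof.
by apply: functional_extensionality => y; rewrite /push /dirac sum_indicator_r.
Qed.

Lemma eq_push_supported T U (p : T -> R) (K L : T -> U -> R) :
  (forall x, p x != 0 -> K x = L x) -> push p K = push p L.
Proof.
move=> KL; apply: functional_extensionality => y; apply: eq_bigr => x _.
by have [->|/KL->] := eqVneq (p x) 0; rewrite ?mul0r.
Qed.

Lemma supported_dirac T (a : T) (G : pred T) : G a -> supported (dirac R a) G.
Proof. by move=> Ga x; rewrite /dirac pnatr_eq0 eqb0 negbK => /eqP <-. Qed.

Lemma supported_push T U (p : T -> R) (K : T -> U -> R) (G : pred U) :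
  (forall x, p x != 0 -> supported (K x) G) -> supported (push p K) G.
Proof.
move=> KG y; apply: contraTT => nGy; rewrite negbK; apply/eqP/big1 => x _.
have [->|/KG KxG] := eqVneq (p x) 0; first by rewrite mul0r.
have [->|/KxG Gy] := eqVneq (K x y) 0; first by rewrite mulr0.
by rewrite Gy in nGy.
Qed.

Lemma supported_iter T (K : T -> T -> R) G p t :
  closed_under K G -> supported p G -> supported (iter t (fun q => push q K) p) G.
Proof.
by move=> KG pG; elim: t => //= t IH; apply: supported_push => x /IH /KG.
Qed.

Lemma push_iter_lumped T U (A : T -> T -> R) (F : T -> U -> R) (K : U -> U -> R) G p t :
  closed_under A G -> (forall x, G x -> push (A x) F = push (F x) K) -> supported p G ->
  push (iter t (fun q => push q A) p) F = iter t (fun q => push q K) (push p F).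
Proof.
move=> AG AFK pG; elim: t => //= t <-.
rewrite !push_comp; apply: eq_push_supported => x /(supported_iter AG pG).
exact: AFK.
Qed.

Lemma dTV_triangle T (p q r : T -> R) : dTV p r <= dTV p q + dTV q r.
Proof.
rewrite /dTV -mulrDr ler_wpM2l ?invr_ge0 ?ler0n // -big_split /=.
by apply: ler_sum => x _; apply: ler_distD.
Qed.

Lemma dTV_push T U (p q : T -> R) (K : T -> U -> R) :
  substochastic K -> dTV (push p K) (push q K) <= dTV p q.
Proof.
move=> K1; rewrite /dTV /push ler_wpM2l ?invr_ge0 ?ler0n //.
apply: (@le_trans _ _ (\sum_y \sum_x `|p x - q x| * K x y)).
  apply: ler_sum => y _; rewrite -sumrB; apply: le_trans (ler_norm_sum _ _ _) _.
  by apply: ler_sum => x _; rewrite -mulrBl normrM (ger0_norm ((K1 x).1 y)).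
rewrite exchange_big /=; apply: ler_sum => x _; rewrite -mulr_sumr.
by rewrite ler_piMr ?(K1 x).2.
Qed.

Lemma dTV_mixture T U (w : T -> R) (f g : T -> U -> R) (e : R) :
  0 <= e -> subprob w -> (forall x, w x != 0 -> dTV (f x) (g x) <= e) ->
  dTV (push w f) (push w g) <= e.
Proof.
move=> e0 [w0 w1] fg.
apply: (@le_trans _ _ (\sum_x w x * dTV (f x) (g x))).
  rewrite /dTV /push.
  under [X in _ <= X]eq_bigr => x _ do rewrite mulrCA.
  rewrite -mulr_sumr ler_wpM2l ?invr_ge0 ?ler0n //.
  under [X in _ <= X]eq_bigr => x _ do rewrite mulr_sumr.
  rewrite exchange_big /=; apply: ler_sum => y _.
  rewrite -sumrB; apply: le_trans (ler_norm_sum _ _ _) _; apply: ler_sum => x _.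
  by rewrite -mulrBr normrM ger0_norm.
apply: le_trans (_ : \sum_x w x * e <= _).
  apply: ler_sum => x _; have [->|/fg] := eqVneq (w x) 0; first by rewrite !mul0r.
  exact: ler_wpM2l.
by rewrite -mulr_suml ler_piMl.
Qed.

Lemma mix_le_dTV T (K : T -> T -> R) nu Tm eps X :
  substochastic K -> push nu K = nu -> mix_le K nu Tm eps -> 0 < nu X ->
  dTV (kpow K Tm X) nu <= eps.
Proof.
move=> K1 nuK /[apply] -[t [tTm]]; apply: le_trans.
elim: Tm tTm => [|s IH]; first by rewrite leqn0 => /eqP->.
rewrite leq_eqVlt => /orP[/eqP->//|/IH]; apply: le_trans.
by have := dTV_push (kpow K s X) nu K1; rewrite nuK.
Qed.

Lemma dTV_iter_hybrid T (A K : T -> T -> R) G p (e : R) t :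
  0 <= e -> substochastic A -> substochastic K -> closed_under A G ->
  subprob p -> supported p G -> (forall x, G x -> dTV (A x) (K x) <= e) ->
  dTV (iter t (fun q => push q A) p) (iter t (fun q => push q K) p) <= t%:R * e.
Proof.
move=> e0 A1 K1 AG p1 pG AK; elim: t => [|t IH].
  by rewrite /= mul0r /dTV big1 ?mulr0 // => x _; rewrite subrr normr0.
rewrite !iterS; set a := iter t (fun q => push q A) p; set b := iter t (fun q => push q K) p.
apply: le_trans (dTV_triangle _ (push a K) _) _.
rewrite -addn1 natrD mulrDl mul1r [_ + e]addrC lerD //.
  apply: dTV_mixture e0 (subprob_iter _ A1 p1) _ => x /(supported_iter AG pG).
  exact: AK.
by apply: le_trans IH; apply: dTV_push.
Qed.

End Kernels.

Section Glauber.
Variables (R : realFieldType) (V : finType).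
Implicit Types (nu : conf V -> R) (s X Y : conf V).

Lemma setvE s v b w : setv s v b w = if w == v then b else s w.
Proof. by rewrite ffunE. Qed.

Lemma setv_at s v b : setv s v b v = b.
Proof. by rewrite setvE eqxx. Qed.

Lemma setvK s v b c : setv (setv s v b) v c = setv s v c.
Proof. by apply/ffunP => w; rewrite !setvE; case: eqP. Qed.

Lemma setv_id s v : setv s v (s v) = s.
Proof. by apply/ffunP => w; rewrite setvE; case: eqP => // ->. Qed.

Lemma condv_setv nu s v b c : condv nu (setv s v c) v b = condv nu s v b.
Proof. by rewrite /condv !setvK. Qed.

Lemma condv_subprob nu s v : (forall t, 0 <= nu t) -> subprob (condv nu s v).
Proof.
move=> nu0; split=> [b|]; first by rewrite /condv divr_ge0 ?addr_ge0.
rewrite big_bool /condv /= -mulrDl addrC.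
have [->|nz] := eqVneq (nu (setv s v false) + nu (setv s v true)) 0.
  by rewrite mul0r ler01.
by rewrite mulfV.
Qed.

Definition heat_bath nu v X Y : R := \sum_b condv nu X v b * (Y == setv X v b)%:R.

Lemma GDE nu X Y : GD nu X Y = #|V|%:R^-1 * \sum_v heat_bath nu v X Y.
Proof. by []. Qed.

Lemma heat_bath_subprob nu v : (forall t, 0 <= nu t) -> substochastic (heat_bath nu v).
Proof.
move=> nu0 X.
have -> : heat_bath nu v X = push (condv nu X v) (fun b => dirac R (setv X v b)).
  by apply: functional_extensionality => Y; apply: eq_bigr => b _; rewrite eq_sym.
by apply: subprob_push (condv_subprob X v nu0) _ => b; apply: subprob_dirac.
Qed.

Lemma GD_substochastic nu : (forall t, 0 <= nu t) -> substochastic (GD nu).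
Proof.
by move=> nu0 X; apply: subprob_uniform_mixture => v; apply: heat_bath_subprob.
Qed.

Lemma eq_setv_split X Y v b :
  (Y == setv X v b)%:R = (b == Y v)%:R * \sum_c (setv Y v c == X)%:R :> R.
Proof.
have [->|ne] := eqVneq Y (setv X v b).
  have e c : (setv X v c == X) = (c == X v).
    by apply/eqP/eqP => [<-|->]; [rewrite setv_at | exact: setv_id].
  rewrite setv_at eqxx mul1r big_bool /= !setvK !e.
  by case: (X v); rewrite /= ?addr0 ?add0r.
have [eb|] := eqVneq b (Y v); last by rewrite mul0r.
rewrite big1 ?mulr0 // => c _; case: eqP => // eX; exfalso.
by move: ne; rewrite -eX setvK eb setv_id eqxx.
Qed.

Lemma sum_setv (F : conf V -> R) v b Y :
  \sum_X F X * (Y == setv X v b)%:R = (b == Y v)%:R * \sum_c F (setv Y v c).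
Proof.
under eq_bigr => X _ do rewrite eq_setv_split mulrCA mulr_sumr.
rewrite -mulr_sumr exchange_big /=; congr (_ * _); apply: eq_bigr => c _.
by under eq_bigr => X _ do rewrite mulrC; rewrite sum_indicator.
Qed.

Lemma heat_bath_stationary nu v : (forall t, 0 <= nu t) -> push nu (heat_bath nu v) = nu.
Proof.
move=> nu0; apply: functional_extensionality => Y; rewrite /push /heat_bath.
under eq_bigr => X _ do rewrite mulr_sumr.
rewrite exchange_big /=.
under eq_bigr => b _ do (under eq_bigr => X _ do rewrite mulrA; rewrite sum_setv eq_sym).
rewrite sum_indicator.
under eq_bigr => c _ do rewrite condv_setv.
rewrite -mulr_suml /condv setv_id big_bool /= addrC.
have nuY : nu Y <= nu (setv Y v false) + nu (setv Y v true).
  by have := setv_id Y v; case: (Y v) => e; rewrite -{1}e ?lerDl ?lerDr ?nu0.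
move: nuY; set Z := _ + _; have [-> nuY|nz _] := eqVneq Z 0; last by rewrite mulrC divfK.
by rewrite mul0r; apply/esym/eqP; rewrite eq_le nuY nu0.
Qed.

Lemma GD_stationary nu : (0 < #|V|)%N -> (forall t, 0 <= nu t) -> push nu (GD nu) = nu.
Proof.
move=> V0 nu0; apply: functional_extensionality => Y; rewrite /push.
under eq_bigr => X _ do rewrite GDE mulrCA mulr_sumr.
rewrite -mulr_sumr exchange_big /=.
under eq_bigr => v _ do rewrite -/(push nu (heat_bath nu v) Y) heat_bath_stationary //.
by rewrite sumr_const -[nu Y *+ _]mulr_natl mulrA mulVf ?mul1r // pnatr_eq0 -lt0n.
Qed.

Lemma GD_closed nu : closed_under (GD nu) [pred t | nu t != 0].
Proof.
move=> X _ Y; apply: contraTT; rewrite /= !negbK => /eqP nuY.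
apply/eqP; rewrite GDE big1 ?mulr0 // => v _; rewrite /heat_bath big1 // => b _.
by case: eqP => [eY|]; rewrite ?mulr0 // /condv -eY nuY !mul0r.
Qed.

End Glauber.

Section Conditioning.
Variables (R : realFieldType) (V : finType).
Implicit Types (nu : conf V -> R) (L : {set V}) (s : conf V).

Lemma marg1E nu L : marg1 nu L = \sum_s (ones_on L s)%:R * nu s.
Proof.
by rewrite /marg1 big_mkcond; apply: eq_bigr => s _; case: ifP; rewrite ?mul1r ?mul0r.
Qed.

Lemma le_marg1 nu L s : (forall t, 0 <= nu t) -> ones_on L s -> nu s <= marg1 nu L.
Proof. by move=> nu0 sL; rewrite /marg1 (bigD1 s) //= lerDl sumr_ge0. Qed.

Lemma marg1_gt0 nu L s : (forall t, 0 <= nu t) -> ones_on L s -> nu s != 0 -> 0 < marg1 nu L.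
Proof. by move=> nu0 sL nz; apply: lt_le_trans (le_marg1 nu0 sL); rewrite lt_def nz nu0. Qed.

Lemma cond1_subprob nu L : (forall t, 0 <= nu t) -> subprob (cond1 nu L).
Proof.
move=> nu0; split=> [s|].
  by rewrite /cond1; case: ifP => // _; rewrite divr_ge0 ?sumr_ge0.
rewrite /cond1 -big_mkcond /= -mulr_suml.
have [->|nz] := eqVneq (marg1 nu L) 0; first by rewrite invr0 mulr0 ler01.
by rewrite mulfV.
Qed.

Lemma cond1_marg1 nu L s : (forall t, 0 <= nu t) ->
  cond1 nu L s * marg1 nu L = (ones_on L s)%:R * nu s.
Proof.
move=> nu0; rewrite /cond1; case: ifP => sL; last by rewrite !mul0r.
rewrite mul1r; have [m0|nz] := eqVneq (marg1 nu L) 0; last by rewrite divfK.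
have := le_marg1 nu0 sL; rewrite m0 mulr0 => le0.
by apply/esym/eqP; rewrite eq_le le0 nu0.
Qed.

Lemma cond1_neq0 nu L s : (forall t, 0 <= nu t) -> ones_on L s -> nu s != 0 ->
  cond1 nu L s != 0.
Proof.
move=> nu0 sL nz; rewrite /cond1 sL mulf_neq0 // invr_eq0 gt_eqF //.
exact: marg1_gt0 sL nz.
Qed.

Lemma cond1_eq0 nu L s : nu s = 0 -> cond1 nu L s = 0.
Proof. by rewrite /cond1 => ->; rewrite mul0r if_same. Qed.

Lemma ones_on_setv L s v b : v \notin L -> ones_on L s -> ones_on L (setv s v b).
Proof.
move=> vL sL; apply/forallP => w; apply/implyP => wL; rewrite setvE.
by case: eqP => [ew|_]; [move: wL; rewrite ew (negbTE vL) | exact: implyP (forallP sL w) wL].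
Qed.

Lemma condv_cond1 nu L s v b : v \notin L -> ones_on L s -> marg1 nu L != 0 ->
  condv (cond1 nu L) s v b = condv nu s v b.
Proof.
move=> vL sL m0; rewrite /condv /cond1 !ones_on_setv //.
by rewrite -mulrDl invf_div mulrA divfK.
Qed.

End Conditioning.

Section FieldDynamics.
Variables (R : realFieldType) (V : finType) (theta : R) (mu : conf V -> R).
Hypotheses (mu_ge0 : forall s, 0 <= mu s) (mu_ones : 0 < mu [ffun => true])
  (theta_gt0 : 0 < theta) (theta_lt1 : theta < 1).
Implicit Types (S : {set V}) (s X Y : conf V).

Definition tilt_norm : R := \sum_t mu t * theta ^+ nones t.

Lemma tilt_norm_gt0 : 0 < tilt_norm.
Proof.
rewrite /tilt_norm (bigD1 [ffun => true]) //= ltr_wpDr ?sumr_ge0 // => [t _|].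
  by rewrite mulr_ge0 // exprn_ge0 // ltW.
by rewrite mulr_gt0 // exprn_gt0.
Qed.

Lemma tiltE s : tilt theta mu s = mu s * theta ^+ nones s / tilt_norm.
Proof. by []. Qed.

Lemma tilt_ge0 s : 0 <= tilt theta mu s.
Proof. by rewrite tiltE divr_ge0 ?mulr_ge0 ?exprn_ge0 // ltW // tilt_norm_gt0. Qed.

Lemma tilt_eq0 s : (tilt theta mu s == 0) = (mu s == 0).
Proof.
rewrite tiltE !mulf_eq0 invr_eq0 (gt_eqF tilt_norm_gt0) expf_eq0 (gt_eqF theta_gt0).
by rewrite andbF !orbF.
Qed.

(* the law of the random set [S] of the field dynamics, and of the set of
   non-star sites of [lift X] *)
Definition select_prob S X : R :=
  \prod_v (if X v then (if v \in S then theta else 1 - theta)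
           else (if v \in S then 1 else 0)).

Lemma FDE X : FD theta mu X = push (select_prob^~ X) (fun S => cond1 (tilt theta mu) (~: S)).
Proof. by []. Qed.

Lemma sum_select_prob X : \sum_S select_prob S X = 1.
Proof.
have <- : \prod_v ((if X v then theta else 1) + (if X v then 1 - theta else 0)) = 1.
  by rewrite big1 // => v _; case: (X v); rewrite ?addr0 // addrC subrK.
rewrite bigA_distr; apply: eq_bigr => S _; apply: eq_bigr => v _.
by case: (X v); case: (v \in S).
Qed.

Lemma select_prob_subprob X : subprob (select_prob^~ X).
Proof.
split; last by rewrite sum_select_prob.
move=> S; rewrite prodr_ge0 // => v _.
by case: (X v); case: (v \in S); rewrite ?ler01 ?lexx ?subr_ge0 ?ltW.
Qed.

Lemma select_prob_ones S X : select_prob S X != 0 -> ones_on (~: S) X.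
Proof.
move=> h; apply/forallP => v; apply/implyP; rewrite in_setC => vS.
move: h; apply: contraNT => Xv; apply/prodf_eq0; exists v => //.
by rewrite (negbTE Xv) (negbTE vS).
Qed.

Lemma select_prob_theta S X : select_prob S X * theta ^+ #|~: S|
  = (ones_on (~: S) X)%:R * theta ^+ nones X * (1 - theta) ^+ #|~: S|.
Proof.
have powS (c : R) : c ^+ #|~: S| = \prod_v (if v \in S then 1 else c).
  by rewrite -prodr_const big_mkcond; apply: eq_bigr => v _; rewrite in_setC; case: (v \in S).
have powX : theta ^+ nones X = \prod_v (if X v then theta else 1).
  by rewrite /nones -prodr_const big_mkcond /=; apply: eq_bigr => v _; rewrite ?inE.
have onesX : (ones_on (~: S) X)%:R = \prod_v (if v \in S then 1 else (X v)%:R) :> R.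
  have [h|h] := boolP (ones_on (~: S) X).
    rewrite big1 // => v _; case: ifPn => // vS.
    by move/forallP: h => /(_ v); rewrite in_setC vS /= => ->.
  move/forallPn: h => [v]; rewrite negb_imply in_setC => /andP [vS Xv].
  by apply/esym/eqP/prodf_eq0; exists v => //; rewrite (negbTE vS) (negbTE Xv).
rewrite !powS powX onesX /select_prob -!big_split /=; apply: eq_bigr => v _.
by case: (X v); case: (v \in S); rewrite /= ?mulr1 ?mul1r ?mul0r // mulrC.
Qed.

Lemma mu_select_prob S X : mu X * select_prob S X * theta ^+ #|~: S|
  = tilt_norm * (1 - theta) ^+ #|~: S| * ((ones_on (~: S) X)%:R * tilt theta mu X).
Proof.
have Z0 := gt_eqF tilt_norm_gt0.
rewrite -mulrA select_prob_theta tiltE; move: tilt_norm Z0 => Z Z0; field.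
by rewrite Z0.
Qed.

Lemma FD_substochastic : substochastic (FD theta mu).
Proof.
move=> X; rewrite FDE; apply: subprob_push (select_prob_subprob X) _ => S.
exact: cond1_subprob tilt_ge0.
Qed.

Lemma FD_balance S Y :
  \sum_X mu X * (select_prob S X * cond1 (tilt theta mu) (~: S) Y) = mu Y * select_prob S Y.
Proof.
have thS : theta ^+ #|~: S| != 0 by rewrite expf_eq0 (gt_eqF theta_gt0) andbF.
apply: (mulIf thS); rewrite [RHS]mu_select_prob -(cond1_marg1 _ _ tilt_ge0) mulr_suml.
under eq_bigr => X _ do rewrite mulrA mulrAC mu_select_prob.
by rewrite -mulr_suml -mulr_sumr marg1E; ring.
Qed.

Lemma FD_stationary : push mu (FD theta mu) = mu.
Proof.
apply: functional_extensionality => Y; rewrite /push.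
under eq_bigr => X _ do rewrite FDE /push mulr_sumr.
rewrite exchange_big /=.
under eq_bigr => S _ do rewrite FD_balance.
by rewrite -mulr_sumr sum_select_prob mulr1.
Qed.

End FieldDynamics.

Section Algorithm.
Variables (R : realFieldType) (V : finType) (theta : R) (mu : conf V -> R).
Hypotheses (mu_ge0 : forall s, 0 <= mu s) (mu_ones : 0 < mu [ffun => true])
  (theta_gt0 : 0 < theta) (theta_lt1 : theta < 1) (V_gt0 : (0 < #|V|)%N).
Implicit Types (S : {set V}) (s t : conf V) (x y : xconf V).

Local Notation tl := (tilt theta mu).
Local Notation nuS S := (cond1 (tilt theta mu) (~: S)).

Let tl_ge0 : forall s, 0 <= tl s := tilt_ge0 mu_ge0 mu_ones theta_gt0.
Let nuS_ge0 S : forall s, 0 <= nuS S s := (cond1_subprob (~: S) tl_ge0).1.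

Lemma contrE x v : contr x v = if x v is Some b then b else true.
Proof. by rewrite ffunE. Qed.

Lemma push_contrK (U : finType) x (K : conf V -> U -> R) :
  push (@contrK R V x) K = K (contr x).
Proof. exact: push_dirac. Qed.

Lemma contr_xsetv x v b : contr (xsetv x v b) = setv (contr x) v b.
Proof.
by apply/ffunP => w; rewrite contrE setvE ffunE; case: eqP => // _; rewrite contrE.
Qed.

Definition xlift s S : xconf V := [ffun v => if v \in S then Some (s v) else None].

Lemma contr_xlift s S : ones_on (~: S) s -> contr (xlift s S) = s.
Proof.
move=> sS; apply/ffunP => v; rewrite contrE ffunE.
by case: ifPn => // vS; move/forallP: sS => /(_ v); rewrite in_setC vS => /= ->.
Qed.

Lemma lift_xlift s S : Defs.lift theta s (xlift s S) = select_prob theta S s.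
Proof.
rewrite /Defs.lift /select_prob; apply: eq_bigr => v _; rewrite ffunE.
by case: (s v); case: (v \in S).
Qed.

Lemma lift_eq0 s x : x != xlift s [set v | x v != None] -> Defs.lift theta s x = 0.
Proof.
move=> nx; have [v xv] : exists v, x v != xlift s [set v | x v != None] v.
  apply/existsP; apply: contraNT nx => /existsPn xE.
  by apply/eqP/ffunP => v; apply/eqP; exact: negbNE (xE v).
apply/eqP/prodf_eq0; exists v => //; move: xv; rewrite ffunE inE.
by case: (x v) => [b|] //=; case: (s v); case: b; rewrite ?eqxx.
Qed.

(* a lifted configuration is determined by its set of non-star sites *)
Lemma sum_lift s (g : xconf V -> R) :
  \sum_x Defs.lift theta s x * g x = \sum_S select_prob theta S s * g (xlift s S).
Proof.
transitivity (\sum_x \sum_S (xlift s S == x)%:R * (Defs.lift theta s x * g x)).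
  apply: eq_bigr => x _; rewrite -mulr_suml; set Sx := [set v | x v != None].
  have [ex|nx] := eqVneq x (xlift s Sx); last by rewrite lift_eq0 // !mul0r mulr0.
  rewrite (bigD1 Sx) //= -ex eqxx big1 ?addr0 ?mul1r // => S nS.
  case: eqP => // e; move/negP: nS; case; apply/eqP/setP => v.
  have := congr1 (fun f : xconf V => f v) (etrans e ex); rewrite !ffunE.
  by case: (v \in S); case: (v \in Sx).
by rewrite exchange_big /=; apply: eq_bigr => S _; rewrite sum_indicator lift_xlift.
Qed.

Lemma lift_push (U : finType) s (G : xconf V -> U -> R) :
  push (Defs.lift theta s) G = push (select_prob theta ^~ s) (fun S => G (xlift s S)).
Proof. by apply: functional_extensionality => u; apply: sum_lift. Qed.

Lemma lift_substochastic : substochastic (@Defs.lift R V theta).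
Proof.
move=> s; split=> [x|].
  rewrite prodr_ge0 // => v _.
  by case: (s v); case: (x v) => [[]|]; rewrite ?ler01 ?lexx ?subr_ge0 ?ltW.
have := sum_lift s (fun=> 1).
rewrite (eq_bigr _ (fun x _ => mulr1 _)) (eq_bigr _ (fun S _ => mulr1 _)).
by rewrite sum_select_prob => ->.
Qed.

Lemma contr_lift s : push (Defs.lift theta s) (@contrK R V) = dirac R s.
Proof.
rewrite lift_push (eq_push_supported (L := fun _ : {set V} => dirac R s)).
  by apply: functional_extensionality => t; rewrite /push -mulr_suml sum_select_prob mul1r.
by move=> S /select_prob_ones sS; rewrite /contrK contr_xlift.
Qed.

Definition site_step x v y : R :=
  if x v is None then (y == x)%:R
  else \sum_b condv tl (contr x) v b * (y == xsetv x v b)%:R.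

Lemma algstepE x y : algstep theta mu x y = #|V|%:R^-1 * \sum_v site_step x v y.
Proof. by []. Qed.

Lemma site_step_subprob x v : subprob (site_step x v).
Proof.
rewrite /site_step; case: (x v) => [c|].
  have -> : (fun y => \sum_b condv tl (contr x) v b * (y == xsetv x v b)%:R)
          = push (condv tl (contr x) v) (fun b => dirac R (xsetv x v b)).
    by apply: functional_extensionality => y; apply: eq_bigr => b _; rewrite eq_sym.
  by apply: subprob_push (condv_subprob _ _ tl_ge0) _ => b; apply: subprob_dirac.
have -> : (fun y => (y == x)%:R) = dirac R x.
  by apply: functional_extensionality => y; rewrite /dirac eq_sym.
exact: subprob_dirac.
Qed.

Lemma algstep_substochastic : substochastic (algstep theta mu).
Proof. by move=> x; apply: subprob_uniform_mixture => v; apply: site_step_subprob. Qed.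

(* the states of step (c) once [lift] has chosen the non-star set [S] *)
Definition admissible S x : bool :=
  [forall v, (x v == None) == (v \notin S)] && (tl (contr x) != 0).

Lemma admissible_star S x v : admissible S x -> (x v == None) = (v \notin S).
Proof. by case/andP => /forallP /(_ v) /eqP. Qed.

Lemma admissible_ones S x : admissible S x -> ones_on (~: S) (contr x).
Proof.
move=> ax; apply/forallP => v; apply/implyP; rewrite in_setC => vS.
by move: (admissible_star v ax); rewrite vS contrE; case: (x v).
Qed.

Lemma admissible_xlift S s : ones_on (~: S) s -> tl s != 0 -> admissible S (xlift s S).
Proof.
move=> sS nz; rewrite /admissible contr_xlift // nz andbT; apply/forallP => v.
by rewrite ffunE; case: (v \in S).
Qed.

Lemma algstep_closed S : closed_under (algstep theta mu) (admissible S).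
Proof.
move=> x ax y; apply: contraTT => ny; rewrite negbK; apply/eqP.
rewrite algstepE big1 ?mulr0 // => v _; rewrite /site_step.
have vS := admissible_star v ax; case xv: (x v) => [c|]; last first.
  by case: eqP => // ey; move: ny; rewrite ey ax.
have {}vS : v \in S by rewrite -[v \in S]negbK -vS xv.
rewrite big1 // => b _; case: eqP => [ey|]; last by rewrite mulr0.
suff /eqP tl0 : tl (setv (contr x) v b) == 0 by rewrite /condv tl0 !mul0r.
move: ny; rewrite ey /admissible contr_xsetv negb_and negbK => /orP [/forallPn [w]|//].
rewrite ffunE; case: (eqVneq w v) => [->|wv]; first by rewrite vS.
by rewrite (admissible_star w ax) eqxx.
Qed.

(* Off [S] the conditioned measure forces the value 1, and on [S] conditioning
   on ones off [S] does not change single-site conditionals. *)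
Lemma site_step_contr S x v : admissible S x ->
  push (site_step x v) (@contrK R V) = heat_bath (nuS S) v (contr x).
Proof.
move=> ax; apply: functional_extensionality => t; rewrite /push /site_step /heat_bath /contrK.
have xS := admissible_ones ax; have nz : tl (contr x) != 0 by case/andP: ax.
have vS := admissible_star v ax; case xv: (x v) => [c|]; rewrite xv /= in vS.
  have {}vS : v \in S by rewrite -[v \in S]negbK -vS.
  under eq_bigr => y _ do rewrite mulr_suml.
  rewrite exchange_big /=; apply: eq_bigr => b _.
  under eq_bigr => y _ do rewrite mulrAC.
  rewrite sum_indicator_r contr_xsetv eq_sym condv_cond1 ?inE ?negbK //.
  by rewrite gt_eqF // (marg1_gt0 tl_ge0 xS nz).
have {}vS : v \notin S by rewrite -vS.
under eq_bigr => y _ do rewrite mulrC.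
rewrite sum_indicator_r big_bool /=.
have xv1 : contr x v = true by rewrite contrE xv.
have set1 : setv (contr x) v true = contr x by rewrite -{1}xv1 setv_id.
have set0 : nuS S (setv (contr x) v false) = 0.
  by rewrite /cond1 ifF //; apply/negP => /forallP /(_ v); rewrite in_setC vS setv_at.
have cv0 : condv (nuS S) (contr x) v false = 0 by rewrite /condv set0 mul0r.
have cv1 : condv (nuS S) (contr x) v true = 1.
  by rewrite /condv set0 add0r set1 mulfV // cond1_neq0.
by rewrite cv0 cv1 set1 mul0r addr0 mul1r eq_sym.
Qed.

Lemma algstep_contr S x : admissible S x ->
  push (algstep theta mu x) (@contrK R V) = GD (nuS S) (contr x).
Proof.
move=> ax; apply: functional_extensionality => t; rewrite /push GDE.
under eq_bigr => y _ do rewrite algstepE -mulrA mulr_suml.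
rewrite -mulr_sumr exchange_big /=; congr (_ * _); apply: eq_bigr => v _.
by rewrite -(site_step_contr v ax).
Qed.

Definition round T2 s : conf V -> R :=
  push (iter T2 (fun q => push q (algstep theta mu)) (Defs.lift theta s)) (@contrK R V).

Lemma round_substochastic T2 : substochastic (round T2).
Proof.
move=> s; apply: subprob_push => [|x]; last exact: subprob_dirac.
exact: subprob_iter algstep_substochastic (lift_substochastic s).
Qed.

Lemma roundE T2 s : tl s != 0 ->
  round T2 s = push (select_prob theta ^~ s) (fun S => kpow (GD (nuS S)) T2 s).
Proof.
move=> nz; rewrite /round -(push_diracr (Defs.lift theta s)) iter_push push_comp lift_push.
apply: eq_push_supported => S /select_prob_ones sS.
rewrite (push_iter_lumped (K := GD (nuS S)) (G := admissible S)) ?push_contrK.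
- by rewrite push_dirac /contrK contr_xlift.
- exact: algstep_closed.
- by move=> x ax; rewrite (algstep_contr ax) push_contrK.
- exact/supported_dirac/admissible_xlift.
Qed.

Lemma round_close_FD T2 e s : 0 <= e -> tilted_mix_le mu theta T2 e -> mu s != 0 ->
  dTV (round T2 s) (FD theta mu s) <= e.
Proof.
move=> e0 mixT2 ms; have nz : tl s != 0 by rewrite tilt_eq0.
rewrite roundE // FDE; apply: dTV_mixture e0 (select_prob_subprob theta_gt0 theta_lt1 s) _.
move=> S /select_prob_ones sS.
apply: mix_le_dTV (GD_substochastic (nuS_ge0 S)) (GD_stationary V_gt0 (nuS_ge0 S))
  (mixT2 _ (marg1_gt0 mu_ge0 sS ms)) _.
by rewrite lt_def nuS_ge0 andbT (cond1_neq0 tl_ge0 sS nz).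
Qed.

Lemma round_closed T2 : closed_under (round T2) [pred s | mu s != 0].
Proof.
move=> s /= ms; have nz : tl s != 0 by rewrite tilt_eq0.
rewrite roundE //; apply: supported_push => S /select_prob_ones sS.
have : supported (kpow (GD (nuS S)) T2 s) [pred t | nuS S t != 0].
  by apply: supported_iter (@GD_closed _ _ (nuS S)) _; apply/supported_dirac/cond1_neq0.
move=> nuS_supp t /nuS_supp; apply: contraNN => /eqP mt /=; apply/eqP.
by apply: cond1_eq0; apply/eqP; rewrite tilt_eq0 // mt.
Qed.

Lemma alg_outE T1 T2 :
  alg_out theta mu T1 T2 = iter T1 (fun q => push q (round T2)) (dirac R [ffun => true]).
Proof.
rewrite /alg_out; elim: T1 => [|i IH]; first by rewrite /= push_dirac contr_lift.
by rewrite [in RHS]iterS -IH [alg_state _ _ _ _]/= /alg_round iter_push !push_comp.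
Qed.

End Algorithm.

Unset Implicit Arguments.

Theorem lemma3p1 (R : realFieldType) (V : finType) (mu : {ffun V -> bool} -> R)
  (theta eps : R) (T1 T2 : nat) :
  is_distr mu ->
  (0 < #|V|)%N ->
  0 < mu [ffun => true] ->
  0 < theta < 1 ->
  0 < eps < 1 ->
  FD_mix_le mu theta T1 (eps / 2) ->
  tilted_mix_le mu theta T2 (eps / (2 * T1%:R)) ->
  dTV (alg_out theta mu T1 T2) mu <= eps.
Proof.
move=> [mu_ge0 _] V_gt0 mu_ones /andP[theta_gt0 theta_lt1] /andP[eps_gt0 _] mixFD mixT2.
set e := eps / (2 * T1%:R).
have e_ge0 : 0 <= e by rewrite divr_ge0 ?mulr_ge0 ?ler0n ?ltW.
have FD1 := FD_substochastic mu_ge0 mu_ones theta_gt0 theta_lt1.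
have rounds_close := dTV_iter_hybrid T1 e_ge0
  (round_substochastic mu_ge0 mu_ones theta_gt0 theta_lt1 T2) FD1
  (round_closed mu_ge0 mu_ones theta_gt0 (T2 := T2)) (subprob_dirac R [ffun => true])
  (supported_dirac (G := [pred s | mu s != 0]) (lt0r_neq0 mu_ones))
  (fun s => round_close_FD mu_ge0 mu_ones theta_gt0 theta_lt1 V_gt0 e_ge0 mixT2).
have FD_close := mix_le_dTV FD1 (FD_stationary mu_ge0 mu_ones theta_gt0) mixFD mu_ones.
have T1e : T1%:R * e <= eps / 2.
  have [->|T1_neq0] := eqVneq T1 0%N; first by rewrite mul0r divr_ge0 ?ltW.
  suff -> : T1%:R * e = eps / 2 by [].
  by rewrite /e; field; rewrite pnatr_eq0.
rewrite alg_outE (splitr eps).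
apply: le_trans (dTV_triangle _ (kpow (FD theta mu) T1 [ffun => true]) _) _.
exact: lerD (le_trans rounds_close T1e) FD_close.
Qed.
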